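(* Let $f^{cl}_{\pi_\star}$ be $\eta$-locally $\delta$-ISS for some $\eta>0$, with gain $\gamma$ satisfying $\gamma(x)\le O(x^{1/r})$ as $x\to0^+$ for some $r\ge1$. Fix a test policy $\pi$ and $\xi\in\mathcal X$, and let $p=r\in\mathbb N$. Assume $\pi,\pi_\star$ are $p$-times continuously differentiable with $\|\bar\pi(x)-\sum_{j=0}^p\frac1{j!}\partial_x^j\bar\pi(x_0)(x-x_0)^{\otimes j}\|\le\frac{L_{\partial^p\pi}}{(p+1)!}\|x-x_0\|^{p+1}$ for all $x,x_0$ and $\bar\pi\in\{\pi,\pi_\star\}$. Choose $\mu,\alpha>0$, $\alpha\le1/2$, with \[2\tfrac{L_{\partial^p\pi}}{(p+1)!}x^{p+1}+(x/\mu)^p\le\gamma^{-1}(x)\quad\text{for all }0\le x\le\alpha.\] If \[\max_{0\le t\le T-1}\max_{0\le j\le p-1}\mu\Big(\tfrac{4}{j!}\|\partial_x^j\Delta_t^{\pi_\star}(\xi;\pi)\|\Big)^{1/p}\le\alpha,\] \[\max_{0\le t\le T-1}\max_{0\le j\le p-1}\Big[\tfrac{2L_{\partial^p\pi}\mu^{p+1}}{(p+1)!}\Big(\tfrac{4}{j!}\|\partial_x^j\Delta_t^{\pi_\star}(\xi;\pi)\|\Big)^{\frac{p+1}{p}}+\tfrac4{j!}\|\partial_x^j\Delta_t^{\pi_\star}(\xi;\pi)\|\Big]\le\eta,\] and $\|\partial_x^p\Delta_t^{\pi_\star}(\xi;\pi)\|\le\frac{p!}{2\mu^p}$ for all $0\le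 t\le T-1$, then for all $1\le t\le T$, \[\|x_t^{\pi_\star}(\xi)-x_t^\pi(\xi)\|\le\max_{0\le k\le t-1}\max_{0\le j\le p-1}\mu\Big(\tfrac4{j!}\Big)^{1/r}\|\partial_x^j\Delta_k^{\pi_\star}(\xi;\pi)\|^{1/r}.\]
   Context: Dynamics $x_{t+1}=f(x_t,u_t)$, $x_0=\xi$. For a policy $\pi$, $f^{cl}_\pi(x,\Delta):=f(x,\pi(x)+\Delta)$; $x_t^\pi(\xi,\{\Delta_s\})$ is the state at time $t$, $x_t^\pi(\xi):=x_t^\pi(\xi,\{0\})$. Initial conditions lie in compact $\mathcal X$. Norms: Euclidean/operator norm. $f^{cl}_\pi$ is $\eta$-locally $\delta$-ISS if there are class $\mathcal{KL}$ $\beta$ and class $\mathcal K$ $\gamma$ with $\|x_t^\pi(\xi_1;\{\Delta_s\}_{s=0}^{t-1})-x_t^\pi(\xi_2;\{0\})\|\le\beta(\|\xi_1-\xi_2\|,t)+\gamma(\max_{0\le k\le t-1}\|\Delta_k\|)$ for all $\xi_1,\xi_2\in\mathcal X$, $t$, and perturbations with $\sup_t\|\Delta_t\|\le\eta$. $\gamma^{-1}$ is the inverse on the range of $\gamma$ ($+\infty$ beyond it). $\partial_x^j\Delta_t^{\pi_\star}(\xi;\pi):=\partial_x^j\pi(x_t^{\pi_\star}(\xi))-\partial_x^j\pi_\star(x_t^{\pi_\star}(\xi))$ for expert policy $\pi_\star$. *)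

From HB Require Import structures.
From mathcomp Require Import all_boot all_order all_algebra.
From mathcomp Require Import all_classical all_reals all_analysis.
Set Implicit Arguments. Unset Strict Implicit. Unset Printing Implicit Defensive.
Import Order.TTheory GRing.Theory Num.Theory.
Import numFieldNormedType.Exports.
Local Open Scope classical_set_scope.
Local Open Scope ring_scope.

Section Defs.
Variable R : realType.

(* Euclidean norm on row vectors (the library's default norm on 'rV is the sup norm). *)
Definition enorm (k : nat) (v : 'rV[R]_k) : R :=
  Num.sqrt (\sum_(i < k) (v ord0 i) ^+ 2).

(* Iterated directional derivatives: iderive [:: v1; ...; vj] g x
   = D^j g(x)[v1, ..., vj] (the j-th derivative applied to v1..vj). *)
Fixpoint iderive (n m : nat) (vs : seq 'rV[R]_n) (g : 'rV[R]_n -> 'rV[R]_m)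
  : 'rV[R]_n -> 'rV[R]_m :=
  match vs with
  | [::] => g
  | v :: vs' => fun x => 'D_v (iderive vs' g) x
  end.

Definition Cp (n m p : nat) (g : 'rV[R]_n -> 'rV[R]_m) : Prop :=
  forall vs : seq 'rV[R]_n, (size vs <= p)%N ->
    continuous (iderive vs g) /\
    ((size vs < p)%N -> forall x, differentiable (iderive vs g) x).

(* Operator norm (Euclidean norms) of a j-multilinear map A given by its
   action on j-tuples (sequences of size j) of vectors. *)
Definition opnorm (n m j : nat) (A : seq 'rV[R]_n -> 'rV[R]_m) : R :=
  sup [set r | exists vs : seq 'rV[R]_n,
        [/\ size vs = j, (forall v, v \in vs -> enorm v <= 1) & r = enorm (A vs)]].

Definition dDelta_norm (n m j : nat) (pi pistar : 'rV[R]_n -> 'rV[R]_m)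
    (x : 'rV[R]_n) : R :=
  opnorm j (fun vs => iderive vs pi x - iderive vs pistar x).

Fixpoint traj (n m : nat) (f : 'rV[R]_n -> 'rV[R]_m -> 'rV[R]_n)
    (pi : 'rV[R]_n -> 'rV[R]_m) (Delta : nat -> 'rV[R]_m) (xi : 'rV[R]_n)
    (t : nat) : 'rV[R]_n :=
  match t with
  | 0 => xi
  | t'.+1 => let x := traj f pi Delta xi t' in f x (pi x + Delta t')
  end.

Definition classK (g : R -> R) : Prop :=
  g 0 = 0 /\ {within `[0, +oo[%classic, continuous g} /\
  (forall a b, 0 <= a -> a < b -> g a < g b).

Definition classKL (b : R -> nat -> R) : Prop :=
  (forall t, classK (fun s => b s t)) /\
  (forall s, 0 <= s -> forall t1 t2, (t1 <= t2)%N -> b s t2 <= b s t1) /\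
  (forall s, 0 <= s -> b s t @[t --> \oo] --> 0).

(* f^cl_pi(x, D) := f(x, pi x + D) is eta-locally delta-ISS on X
   with KL function beta and class K gain gamma. *)
Definition locally_dISS (n m : nat) (f : 'rV[R]_n -> 'rV[R]_m -> 'rV[R]_n)
    (pi : 'rV[R]_n -> 'rV[R]_m) (X : set 'rV[R]_n) (eta : R)
    (beta : R -> nat -> R) (gamma : R -> R) : Prop :=
  classKL beta /\ classK gamma /\
  forall xi1 xi2, X xi1 -> X xi2 -> forall (Delta : nat -> 'rV[R]_m),
    (forall s, enorm (Delta s) <= eta) -> forall t,
    enorm (traj f pi Delta xi1 t - traj f pi (fun _ => 0) xi2 t)
      <= beta (enorm (xi1 - xi2)) t
         + gamma (\big[Num.max/0]_(k < t) enorm (Delta k)).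

(* y <= gamma^{-1}(x), where gamma^{-1} is the inverse of gamma on its range
   (over [0,+oo)) and +oo outside the range. *)
Definition le_ginv (gamma : R -> R) (y x : R) : Prop :=
  forall s, 0 <= s -> gamma s = x -> y <= s.

End Defs.

From HB Require Import structures.
From mathcomp Require Import all_boot all_order all_algebra.
From mathcomp Require Import all_classical all_reals all_analysis.
From mathcomp Require Import ring.
Import Order.TTheory GRing.Theory Num.Theory.
Import numFieldNormedType.Exports.
Local Open Scope classical_set_scope.
Local Open Scope ring_scope.
Set Implicit Arguments. Unset Strict Implicit.

(* If the two trajectories stay eps-close up to time t, then at x_k^pi the gap
   pi - pistar equals the Taylor expansion of the derivative gaps at x_k^pistar
   up to a remainder 2 L eps^(p+1) / (p+1)!; the hypotheses on the derivative
   gaps bound the expansion by (eps / mu)^p.  The pi-trajectory is the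
   pistar-trajectory driven by the input perturbations pi - pistar, so local
   delta-ISS bounds the deviation at time t by gamma of
   2 L eps^(p+1) / (p+1)! + (eps / mu)^p <= gamma^-1(eps), i.e. by eps.  Strong
   induction on t with eps the running maximum of the right-hand side closes
   the argument. *)

Section EuclideanNorm.
Variables (R : realType) (k : nat).
Implicit Types (u v a b : 'rV[R]_k).

Lemma enorm_ge0 v : 0 <= enorm v.
Proof. exact: sqrtr_ge0. Qed.

Lemma enorm_sqr v : enorm v ^+ 2 = \sum_i v ord0 i ^+ 2.
Proof. by rewrite sqr_sqrtr // sumr_ge0 // => i _; exact: sqr_ge0. Qed.

Lemma enormZ c v : enorm (c *: v) = `|c| * enorm v.
Proof.
rewrite /enorm; under eq_bigr do rewrite mxE exprMn.
by rewrite -mulr_sumr sqrtrM ?sqr_ge0 // sqrtr_sqr.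
Qed.

Lemma enorm0 : enorm (0 : 'rV[R]_k) = 0.
Proof. by rewrite -(scale0r (0 : 'rV[R]_k)) enormZ normr0 mul0r. Qed.

Lemma enormN v : enorm (- v) = enorm v.
Proof. by rewrite -scaleN1r enormZ normrN1 mul1r. Qed.

Lemma enorm_distC u v : enorm (u - v) = enorm (v - u).
Proof. by rewrite -enormN opprB. Qed.

Lemma enorm_dim0 v : k = 0%N -> enorm v = 0.
Proof.
by move=> k0; rewrite /enorm big_pred0 ?sqrtr0 // => -[i ik]; rewrite k0 in ik.
Qed.

Lemma enorm_coord_le v i : `|v ord0 i| <= enorm v.
Proof.
rewrite -sqrtr_sqr; apply: ler_wsqrtr.
by rewrite (bigD1 i) //= lerDl sumr_ge0 // => j _; exact: sqr_ge0.
Qed.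

Lemma enorm_eq0 v : (enorm v == 0) = (v == 0).
Proof.
apply/eqP/eqP => [v0|->]; last exact: enorm0.
apply/rowP => i; rewrite mxE; apply/eqP.
by rewrite -normr_le0 -v0 enorm_coord_le.
Qed.

Lemma enorm_gt0 v : (0 < enorm v) = (v != 0).
Proof. by rewrite lt_def enorm_eq0 enorm_ge0 andbT. Qed.

(* Cauchy-Schwarz, summing the AM-GM bounds 2xy <= s x^2 + y^2 / s with s = |b| / |a|. *)
Lemma dot_le_enorm a b : \sum_i a ord0 i * b ord0 i <= enorm a * enorm b.
Proof.
have [->|a0] := eqVneq a 0.
  by rewrite enorm0 mul0r big1 // => i _; rewrite mxE mul0r.
have [->|b0] := eqVneq b 0.
  by rewrite enorm0 mulr0 big1 // => i _; rewrite mxE mulr0.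
move: a0 b0; rewrite -!enorm_gt0 => a0 b0.
set s := enorm b / enorm a; have s0 : 0 < s by rewrite divr_gt0.
have amgm i : 2 * (a ord0 i * b ord0 i) <= s * a ord0 i ^+ 2 + s^-1 * b ord0 i ^+ 2.
  rewrite -subr_ge0 (_ : _ - _ = s^-1 * (s * a ord0 i - b ord0 i) ^+ 2).
    by rewrite mulr_ge0 ?sqr_ge0 // invr_ge0 ltW.
  by field; rewrite gt_eqF.
have : 2 * \sum_i a ord0 i * b ord0 i <=
    s * \sum_i a ord0 i ^+ 2 + s^-1 * \sum_i b ord0 i ^+ 2.
  by rewrite !mulr_sumr -big_split; exact: ler_sum.
rewrite -!enorm_sqr.
have -> : s * enorm a ^+ 2 + s^-1 * enorm b ^+ 2 = 2 * (enorm a * enorm b).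
  by rewrite /s; field; rewrite !gt_eqF.
by rewrite ler_pM2l.
Qed.

Lemma enormD u v : enorm (u + v) <= enorm u + enorm v.
Proof.
rewrite -(@ler_pXn2r _ 2) ?nnegrE ?addr_ge0 ?enorm_ge0 //.
rewrite sqrrD !enorm_sqr (_ : \sum_i _ = \sum_i (u ord0 i ^+ 2 + v ord0 i ^+ 2
    + 2 * (u ord0 i * v ord0 i))); last first.
  by apply: eq_bigr => i _; rewrite mxE sqrrD; ring.
rewrite !big_split /= -mulr_sumr -addrA [_ + 2 * _]addrC addrA lerD2r lerD2l.
by rewrite mulr2n -mulr2n -mulr_natl ler_wpM2l // dot_le_enorm.
Qed.

Lemma enorm_sum (I : Type) (r : seq I) (P : pred I) (F : I -> 'rV[R]_k) :
  enorm (\sum_(i <- r | P i) F i) <= \sum_(i <- r | P i) enorm (F i).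
Proof.
elim/big_ind2 : _ => [|x1 x2 y1 y2 h1 h2|//]; first by rewrite enorm0.
by apply: le_trans (enormD _ _) _; exact: lerD.
Qed.

Lemma coef_ge0_of_enorm_bound c j : (0 < k)%N ->
  (forall x x0 : 'rV[R]_k, 0 <= c * enorm (x - x0) ^+ j) -> 0 <= c.
Proof.
move=> k0 /(_ (const_mx 1) 0); rewrite subr0 pmulr_lge0 // exprn_gt0 // enorm_gt0.
by apply/eqP => /rowP/(_ (Ordinal k0)); rewrite !mxE; apply/eqP; exact: oner_neq0.
Qed.

End EuclideanNorm.

Section IteratedDerivative.
Variables (R : realType) (n m p : nat) (g : 'rV[R]_n -> 'rV[R]_m).
Hypothesis Cg : Cp p g.

Lemma iderive_differentiable vs x :
  (size vs < p)%N -> differentiable (iderive vs g) x.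
Proof. by move=> h; have [_] := Cg (ltnW h); apply. Qed.

Lemma iderive_basis ws rest v : (size ws + (size rest).+1 <= p)%N ->
  iderive (ws ++ v :: rest) g =
  fun x => \sum_(i < n) v ord0 i *: iderive (ws ++ delta_mx 0 i :: rest) g x.
Proof.
elim: ws => [|w ws IH] hs /=; apply: funext => x.
  have dr : differentiable (iderive rest g) x by exact: iderive_differentiable.
  rewrite deriveE // [X in 'd _ _ X]row_sum_delta linear_sum.
  by apply: eq_bigr => i _; rewrite linearZ /= deriveE.
have der i : derivable (iderive (ws ++ delta_mx 0 i :: rest) g) x w.
  by apply/diff_derivable/iderive_differentiable; rewrite size_cat.
rewrite IH; last exact: ltnW.
rewrite -(fct_sumE _ _ (fun i y =>
  v ord0 i *: iderive (ws ++ delta_mx 0 i :: rest) g y)).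
rewrite derive_sum => [|i]; last exact: derivableZ.
by apply: eq_bigr => i _; rewrite deriveZ.
Qed.

Lemma iderive_nseqZ j a v : (j <= p)%N ->
  iderive (nseq j (a *: v)) g = fun x => a ^+ j *: iderive (nseq j v) g x.
Proof.
elim: j => [|j IH] hj /=; apply: funext => x; first by rewrite expr0 scale1r.
have dj : differentiable (iderive (nseq j v) g) x.
  by apply: iderive_differentiable; rewrite size_nseq.
rewrite IH; last exact: ltnW.
rewrite deriveZ; last exact: diff_derivable.
by rewrite deriveE // linearZ /= -deriveE // scalerA exprSr.
Qed.

Lemma iderive_unit_bounded x j ws : (size ws + j <= p)%N ->
  exists M, forall vs, size vs = j -> (forall v, v \in vs -> enorm v <= 1) ->
    enorm (iderive (ws ++ vs) g x) <= M.
Proof.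
elim: j ws => [|j IH] ws hs.
  by exists (enorm (iderive ws g x)) => vs /size0nil -> _; rewrite cats0.
have bounded_i (i : 'I_n) : exists M, forall vs, size vs = j ->
    (forall v, v \in vs -> enorm v <= 1) ->
    enorm (iderive (rcons ws (delta_mx 0 i) ++ vs) g x) <= M.
  by apply: IH; rewrite size_rcons addSnnS.
have [M hM] := choice bounded_i.
exists (\sum_i M i) => -[//|v vs] /= [hsz] hv.
rewrite iderive_basis ?hsz //; apply: le_trans (enorm_sum _ _ _) _.
apply: ler_sum => i _; rewrite enormZ -[M i]mul1r.
apply: ler_pM; rewrite ?normr_ge0 ?enorm_ge0 //.
  by apply: le_trans (enorm_coord_le _ _) _; apply: hv; exact: mem_head.
by rewrite -cat_rcons; apply: hM => // w hw; apply: hv; rewrite inE hw orbT.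
Qed.

End IteratedDerivative.

Section OperatorNorm.
Variables (R : realType) (n m j : nat) (A : seq 'rV[R]_n -> 'rV[R]_m).
Hypothesis A_bounded : exists M, forall vs, size vs = j ->
  (forall v, v \in vs -> enorm v <= 1) -> enorm (A vs) <= M.

Lemma opnorm_ub vs : size vs = j -> (forall v, v \in vs -> enorm v <= 1) ->
  enorm (A vs) <= opnorm j A.
Proof.
move=> hs hv; apply: sup_upper_bound; last by exists vs.
split; first by exists (enorm (A vs)), vs.
by have [M hM] := A_bounded; exists M => r [ws [hws hw ->]]; exact: hM.
Qed.

Lemma opnorm_ge0 : 0 <= opnorm j A.
Proof.
apply: le_trans (enorm_ge0 (A (nseq j 0))) (opnorm_ub _ _).
  by rewrite size_nseq.
by move=> v /nseqP[-> _]; rewrite enorm0.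
Qed.

End OperatorNorm.

Section DerivativeGap.
Variables (R : realType) (n m p : nat) (g1 g2 : 'rV[R]_n -> 'rV[R]_m).
Variable x : 'rV[R]_n.
Hypotheses (C1 : Cp p g1) (C2 : Cp p g2).

Let gap_bounded j : (j <= p)%N -> exists M, forall vs, size vs = j ->
  (forall v, v \in vs -> enorm v <= 1) ->
  enorm (iderive vs g1 x - iderive vs g2 x) <= M.
Proof.
move=> hj; have [M1 h1] := iderive_unit_bounded C1 x (ws := [::]) hj.
have [M2 h2] := iderive_unit_bounded C2 x (ws := [::]) hj.
exists (M1 + M2) => vs hs hv; apply: le_trans (enormD _ _) _.
by rewrite enormN lerD ?h1 ?h2.
Qed.

Lemma dDelta_norm_ge0 j : (j <= p)%N -> 0 <= dDelta_norm j g1 g2 x.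
Proof. by move/gap_bounded; exact: opnorm_ge0. Qed.

Lemma dDelta_norm_nseq j v : (j <= p)%N ->
  enorm (iderive (nseq j v) g1 x - iderive (nseq j v) g2 x)
    <= dDelta_norm j g1 g2 x * enorm v ^+ j.
Proof.
move=> hj; set e := enorm v.
pose u := if e == 0 then 0 else e^-1 *: v.
have vE : v = e *: u.
  rewrite /u; case: eqP => [/eqP|/eqP e0]; last by rewrite scalerA mulfV ?scale1r.
  by rewrite enorm_eq0 scaler0 => /eqP.
have u1 : enorm u <= 1.
  rewrite /u; case: eqP => [_|/eqP e0]; first by rewrite enorm0.
  by rewrite enormZ ger0_norm ?invr_ge0 ?enorm_ge0 // mulVf.
rewrite vE (iderive_nseqZ C1) // (iderive_nseqZ C2) // -scalerBr enormZ.
rewrite ger0_norm ?exprn_ge0 ?enorm_ge0 // mulrC ler_wpM2r ?exprn_ge0 ?enorm_ge0 //.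
apply: (opnorm_ub (gap_bounded hj)); first by rewrite size_nseq.
by move=> w /nseqP[-> _].
Qed.

End DerivativeGap.

Lemma bigmax_ind d (T : orderType d) (I : Type) (r : seq I) (P : pred I)
    (F : I -> T) (x0 : T) (Q : T -> Prop) :
  Q x0 -> (forall i, P i -> Q (F i)) ->
  Q (\big[Order.max/x0]_(i <- r | P i) F i).
Proof. by move=> ? ?; elim/big_ind: _ => // a b ? ?; rewrite maxEle; case: ifP. Qed.

Lemma bigmax_ord_mono d (T : orderType d) (x : T) (G : nat -> T) k t :
  (k <= t)%N -> (\big[Order.max/x]_(i < k) G i <= \big[Order.max/x]_(i < t) G i)%O.
Proof.
move=> kt; apply: bigmax_le => [|i _]; first exact: bigmax_ge_id.
exact: (le_bigmax x (fun i : 'I_t => G i) (widen_ord kt i)).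
Qed.

Section RealFacts.
Variable R : realType.

Lemma sum_exp_half_le2 N : \sum_(j < N) (2^-1 : R) ^+ j <= 2.
Proof.
suff : \sum_(j < N) (2^-1 : R) ^+ j = 2 - 2 * 2^-1 ^+ N.
  by move=> ->; rewrite lerBlDr lerDl mulr_ge0 ?exprn_ge0.
elim: N => [|N IH]; first by rewrite big_ord0 expr0 mulr1 subrr.
by rewrite big_ord_recr /= IH exprSr; field.
Qed.

Lemma powR_invK (c : R) p : 0 <= c -> (0 < p)%N -> (c `^ p%:R^-1) ^+ p = c.
Proof.
move=> c0 p0; rewrite -powR_mulrn ?powR_ge0 // -powRrM mulVf ?powRr1 //.
by rewrite pnatr_eq0 -lt0n.
Qed.

Lemma powR_invS (c : R) p : 0 <= c ->
  (c `^ p%:R^-1) ^+ p.+1 = c `^ (p.+1%:R / p%:R).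
Proof. by move=> c0; rewrite -powR_mulrn ?powR_ge0 // -powRrM mulrC. Qed.

End RealFacts.

Section ClassKInverse.
Variables (R : realType) (gamma : R -> R).
Hypothesis Kg : classK gamma.

(* If gamma y exceeded e, the intermediate value theorem would give some
   c in [0, y] with gamma c = e, forcing z <= c <= y. *)
Lemma classK_le_ginv y z e :
  0 <= y -> 0 <= e -> y <= z -> le_ginv gamma z e -> gamma y <= e.
Proof.
case: Kg => g0 [gc ginc] y0 e0 yz hg; rewrite leNgt; apply/negP => ey.
have cont : {within `[0, y], continuous gamma}.
  by apply: continuous_subspaceW gc => c /=; rewrite !in_itv /= => /andP[->].
have : Num.min (gamma 0) (gamma y) <= e <= Num.max (gamma 0) (gamma y).
  by rewrite g0 /Num.min /Num.max (le_lt_trans e0 ey) e0 ltW.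
case/(IVT y0 cont) => c; rewrite in_itv /= => /andP[c0 cy] gce.
have cyE : c = y by apply/eqP; rewrite eq_le cy (le_trans yz (hg c c0 gce)).
by move: ey; rewrite -gce cyE ltxx.
Qed.

End ClassKInverse.

Definition taylor_poly (R : realType) n m p (g : 'rV[R]_n -> 'rV[R]_m) x0 v :=
  \sum_(j < p.+1) (j`!%:R)^-1 *: iderive (nseq j v) g x0.

(* The quantity required to be at most gamma^-1(x) in the hypotheses of the theorem. *)
Definition policy_gap_bound (R : realType) (L mu : R) p (x : R) :=
  2 * (L / (p.+1)`!%:R) * x ^+ p.+1 + (x / mu) ^+ p.

Lemma policy_gap_bound_root (R : realType) (L mu c : R) p :
  0 < mu -> 0 <= c -> (0 < p)%N ->
  policy_gap_bound L mu p (mu * c `^ p%:R^-1)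
    = 2 * L * mu ^+ p.+1 / (p.+1)`!%:R * c `^ (p.+1%:R / p%:R) + c.
Proof.
move=> mu0 c0 p0; rewrite /policy_gap_bound exprMn powR_invS //.
by rewrite [mu * _]mulrC mulfK ?gt_eqF // powR_invK //; ring.
Qed.

Section TaylorGap.
Variables (R : realType) (n m p : nat) (pi pistar : 'rV[R]_n -> 'rV[R]_m).
Variables (L mu eps : R) (x x0 : 'rV[R]_n).
Hypotheses (p0 : (0 < p)%N) (Cpi : Cp p pi) (Cpistar : Cp p pistar).
Hypotheses (L0 : 0 <= L) (mu0 : 0 < mu) (eps_half : eps <= 2^-1).
Hypothesis close : enorm (x - x0) <= eps.
Hypothesis low_gaps : forall j, (j < p)%N ->
  mu * (4 / j`!%:R * dDelta_norm j pi pistar x0) `^ p%:R^-1 <= eps.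
Hypothesis top_gap : dDelta_norm p pi pistar x0 <= p`!%:R / (2 * mu ^+ p).
Hypothesis taylor_pi :
  enorm (pi x - taylor_poly p pi x0 (x - x0)) <= L / (p.+1)`!%:R * enorm (x - x0) ^+ p.+1.
Hypothesis taylor_pistar :
  enorm (pistar x - taylor_poly p pistar x0 (x - x0))
    <= L / (p.+1)`!%:R * enorm (x - x0) ^+ p.+1.

Let d j := dDelta_norm j pi pistar x0.
Let e := enorm (x - x0).

Let eps0 : 0 <= eps. Proof. exact: le_trans (enorm_ge0 _) close. Qed.

Lemma taylor_low_term_le j : (j < p)%N ->
  (j`!%:R)^-1 * (d j * e ^+ j) <= (eps / mu) ^+ p / 4 * 2^-1 ^+ j.
Proof.
move=> jp; set c := 4 / j`!%:R * d j.
have c0 : 0 <= c.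
  by rewrite mulr_ge0 ?divr_ge0 // (dDelta_norm_ge0 x0 Cpi Cpistar (ltnW jp)).
have -> : (j`!%:R)^-1 * (d j * e ^+ j) = c / 4 * e ^+ j.
  by rewrite /c; field; rewrite pnatr_eq0 -lt0n fact_gt0.
apply: ler_pM; rewrite ?divr_ge0 ?exprn_ge0 ?enorm_ge0 //.
  rewrite ler_pM2r // -(powR_invK c0 p0).
  apply: lerXn2r; rewrite ?nnegrE ?powR_ge0 ?divr_ge0 ?(ltW mu0) //.
  by rewrite ler_pdivlMr // mulrC; exact: low_gaps.
by apply: lerXn2r; rewrite ?nnegrE ?enorm_ge0 ?(le_trans close).
Qed.

Lemma taylor_top_term_le : (p`!%:R)^-1 * (d p * e ^+ p) <= (eps / mu) ^+ p / 2.
Proof.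
have -> : (eps / mu) ^+ p / 2 = (p`!%:R)^-1 * (p`!%:R / (2 * mu ^+ p) * eps ^+ p).
  by rewrite expr_div_n; field; rewrite pnatr_eq0 -lt0n fact_gt0 expf_neq0 ?gt_eqF.
rewrite ler_wpM2l ?invr_ge0 ?ler0n //.
by rewrite ler_pM ?(dDelta_norm_ge0 x0 Cpi Cpistar) ?exprn_ge0 ?enorm_ge0 //
  lerXn2r ?nnegrE ?enorm_ge0.
Qed.

Lemma taylor_poly_gap_le :
  enorm (taylor_poly p pi x0 (x - x0) - taylor_poly p pistar x0 (x - x0))
    <= (eps / mu) ^+ p.
Proof.
rewrite /taylor_poly -sumrB; apply: le_trans (enorm_sum _ _ _) _.
have term_le (j : 'I_p.+1) : enorm ((j`!%:R)^-1 *: iderive (nseq j (x - x0)) pi x0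
    - (j`!%:R)^-1 *: iderive (nseq j (x - x0)) pistar x0) <= (j`!%:R)^-1 * (d j * e ^+ j).
  rewrite -scalerBr enormZ ger0_norm ?invr_ge0 ?ler0n //.
  by apply: ler_wpM2l; rewrite ?invr_ge0 // (dDelta_norm_nseq x0 Cpi Cpistar _ (ltn_ord j)).
apply: le_trans (ler_sum _ (fun j _ => term_le j)) _.
rewrite big_ord_recr /=; apply: le_trans (lerD _ taylor_top_term_le) _.
  exact: ler_sum (fun j _ => taylor_low_term_le (ltn_ord j)).
rewrite -mulr_sumr; apply: le_trans (lerD (ler_wpM2l _ (sum_exp_half_le2 R p)) (lexx _)) _.
  by apply: divr_ge0 => //; apply/exprn_ge0/divr_ge0 => //; exact: ltW.
by rewrite [leLHS](_ : _ = (eps / mu) ^+ p) //; field.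
Qed.

Lemma policy_gap_le : enorm (pi x - pistar x) <= policy_gap_bound L mu p eps.
Proof.
have -> : pi x - pistar x = (pi x - taylor_poly p pi x0 (x - x0))
    - (pistar x - taylor_poly p pistar x0 (x - x0))
    + (taylor_poly p pi x0 (x - x0) - taylor_poly p pistar x0 (x - x0)).
  by rewrite addrAC subrKA opprB addrA subrK.
apply: le_trans (enormD _ _) _; rewrite /policy_gap_bound lerD ?taylor_poly_gap_le //.
apply: le_trans (enormD _ _) _; rewrite enormN.
have rem_le : L / (p.+1)`!%:R * e ^+ p.+1 <= L / (p.+1)`!%:R * eps ^+ p.+1.
  by rewrite ler_wpM2l ?divr_ge0 ?ler0n // lerXn2r ?nnegrE ?enorm_ge0.
by rewrite -mulrA mulr_natl mulr2n lerD // (le_trans _ rem_le).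
Qed.

End TaylorGap.

Section Tracking.
Variables (R : realType) (n m : nat) (f : 'rV[R]_n -> 'rV[R]_m -> 'rV[R]_n).
Variables (pistar pi : 'rV[R]_n -> 'rV[R]_m) (xi : 'rV[R]_n).

Let xs := traj f pistar (fun _ => 0) xi.
Let xp := traj f pi (fun _ => 0) xi.

Lemma traj_perturbed_policy (D : nat -> 'rV[R]_m) t :
  (forall s, (s < t)%N -> D s = pi (xp s) - pistar (xp s)) ->
  traj f pistar D xi t = xp t.
Proof.
elim: t => [//|t IH] hD /=.
by rewrite IH => [|s st]; [rewrite hD // addrC subrK /xp /= addr0 | apply/hD/ltnW].
Qed.

Variables (X : set 'rV[R]_n) (eta : R) (beta : R -> nat -> R) (gamma : R -> R).
Hypotheses (ISS : locally_dISS f pistar X eta beta gamma) (Xxi : X xi).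

Lemma dISS_deviation_le D t : (forall s, enorm (D s) <= eta) ->
  enorm (xs t - traj f pistar D xi t)
    <= gamma (\big[Num.max/0]_(k < t) enorm (D k)).
Proof.
case: ISS => -[Kbeta _] [_ hISS] hD; rewrite enorm_distC.
by have := hISS xi xi Xxi Xxi D hD t; rewrite subrr enorm0 (proj1 (Kbeta t)) add0r.
Qed.


Variables (p : nat) (L mu alpha : R) (T : nat).
Hypotheses (p0 : (0 < p)%N) (Cpi : Cp p pi) (Cpistar : Cp p pistar).
Hypothesis taylor_bound : forall g, g = pi \/ g = pistar -> forall x x0 : 'rV[R]_n,
  enorm (g x - taylor_poly p g x0 (x - x0)) <= L / (p.+1)`!%:R * enorm (x - x0) ^+ p.+1.
Hypotheses (L0 : 0 <= L) (mu0 : 0 < mu) (eta0 : 0 <= eta).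
Hypotheses (alpha0 : 0 <= alpha) (alpha_half : alpha <= 2^-1).
Hypothesis ginv : forall x, 0 <= x <= alpha -> le_ginv gamma (policy_gap_bound L mu p x) x.

Let d t j := dDelta_norm j pi pistar (xs t).
Let F t j := mu * (4 / j`!%:R * d t j) `^ p%:R^-1.

Hypothesis low_alpha : forall t j, (t < T)%N -> (j < p)%N -> F t j <= alpha.
Hypothesis low_eta : forall t j, (t < T)%N -> (j < p)%N ->
  2 * L * mu ^+ p.+1 / (p.+1)`!%:R * (4 / j`!%:R * d t j) `^ (p.+1%:R / p%:R)
    + 4 / j`!%:R * d t j <= eta.
Hypothesis top : forall t, (t < T)%N -> d t p <= p`!%:R / (2 * mu ^+ p).

Lemma tracking_step t eps : (t <= T)%N -> 0 <= eps <= alpha ->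
  policy_gap_bound L mu p eps <= eta ->
  (forall k, (k < t)%N -> enorm (xs k - xp k) <= eps) ->
  (forall k j, (k < t)%N -> (j < p)%N -> F k j <= eps) ->
  enorm (xs t - xp t) <= eps.
Proof.
move=> tT eps_range budget_eta close low; have /andP[eps0 eps_alpha] := eps_range.
have Kg : classK gamma by case: ISS => _ [].
have gap k : (k < t)%N ->
    enorm (pi (xp k) - pistar (xp k)) <= policy_gap_bound L mu p eps.
  move=> kt; apply: (policy_gap_le (x0 := xs k) p0 Cpi Cpistar L0 mu0).
  - exact: le_trans eps_alpha alpha_half.
  - by rewrite enorm_distC close.
  - by move=> j; exact: low.
  - exact: top (leq_trans kt tT).
  - exact: (taylor_bound (g := pi) (or_introl erefl)).
  - exact: (taylor_bound (g := pistar) (or_intror erefl)).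
pose D s := if (s < t)%N then pi (xp s) - pistar (xp s) else 0.
have budget0 : 0 <= policy_gap_bound L mu p eps.
  by rewrite addr_ge0 ?mulr_ge0 ?exprn_ge0 ?divr_ge0 ?ler0n ?(ltW mu0).
have D_le s : enorm (D s) <= policy_gap_bound L mu p eps.
  by rewrite /D; case: ifP => [/gap //|_]; rewrite enorm0.
rewrite -(@traj_perturbed_policy D) => [|s st]; last by rewrite /D st.
apply: le_trans (dISS_deviation_le t (fun s => le_trans (D_le s) budget_eta)) _.
apply: (classK_le_ginv Kg _ eps0 _ (ginv eps_range)); first exact: bigmax_ge_id.
by apply: bigmax_le => // k _.
Qed.

Let B t := \big[Num.max/0]_(k < t) \big[Num.max/0]_(j < p) F k j.

Lemma running_max_le_alpha t : (t <= T)%N -> B t <= alpha.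
Proof.
move=> tT; apply: bigmax_le => // k _; apply: bigmax_le => // j _.
exact: low_alpha (leq_trans (ltn_ord k) tT) (ltn_ord j).
Qed.

Lemma running_max_gap_le_eta t : (t <= T)%N -> policy_gap_bound L mu p (B t) <= eta.
Proof.
have gap0 : policy_gap_bound L mu p 0 <= eta.
  by rewrite /policy_gap_bound mul0r !expr0n /= gtn_eqF // mulr0 addr0.
move=> tT; pose Q x := policy_gap_bound L mu p x <= eta.
apply: (@bigmax_ind _ _ _ _ _ _ _ Q) => // k _.
apply: (@bigmax_ind _ _ _ _ _ _ _ Q) => // j _.
rewrite /Q /F policy_gap_bound_root ?mulr_ge0 ?divr_ge0 ?ler0n //.
  exact: low_eta (leq_trans (ltn_ord k) tT) (ltn_ord j).
by rewrite /d (dDelta_norm_ge0 _ Cpi Cpistar (ltnW (ltn_ord j))).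
Qed.

Lemma tracking t : (t <= T)%N -> enorm (xs t - xp t) <= B t.
Proof.
elim/ltn_ind: t => t IH tT; apply: tracking_step => //.
- by rewrite bigmax_ge_id running_max_le_alpha.
- exact: running_max_gap_le_eta.
- move=> k kt; apply: le_trans (IH k kt (ltnW (leq_trans kt tT))) _.
  exact: (bigmax_ord_mono 0 (fun k => \big[Num.max/0]_(j < p) F k j) (ltnW kt)).
- move=> k j kt jp; apply: le_trans (le_bigmax 0 (fun j : 'I_p => F k j) (Ordinal jp)) _.
  exact: (le_bigmax _ (fun k : 'I_t => \big[Num.max/0]_(j < p) F k j) (Ordinal kt)).
Qed.

End Tracking.

Theorem mainTheorem4 (R : realType) (n m : nat)
  (f : 'rV[R]_n -> 'rV[R]_m -> 'rV[R]_n)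
  (pistar pi : 'rV[R]_n -> 'rV[R]_m)
  (X : set 'rV[R]_n) (eta : R) (gamma : R -> R) (p : nat)
  (xi : 'rV[R]_n) (L mu alpha : R) (T : nat) :
  compact X ->
  0 < eta ->
  (exists beta, locally_dISS f pistar X eta beta gamma) ->
  (0 < p)%N ->
  (* gamma(x) <= O(x^{1/r}) as x -> 0+, with r = p *)
  (exists C delta, 0 < delta /\
     forall x, 0 < x < delta -> gamma x <= C * x `^ (p%:R)^-1) ->
  X xi ->
  Cp p pi -> Cp p pistar ->
  (forall pib, pib = pi \/ pib = pistar ->
   forall x x0 : 'rV[R]_n,
     enorm (pib x - \sum_(j < p.+1)
                (j`!%:R)^-1 *: iderive (nseq j (x - x0)) pib x0)
       <= L / (p.+1)`!%:R * enorm (x - x0) ^+ p.+1) ->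
  0 < mu -> 0 < alpha -> alpha <= 2^-1 ->
  (forall x, 0 <= x <= alpha ->
     le_ginv gamma (2 * (L / (p.+1)`!%:R) * x ^+ p.+1 + (x / mu) ^+ p) x) ->
  let d t j := dDelta_norm j pi pistar (traj f pistar (fun _ => 0) xi t) in
  (forall t j, (t < T)%N -> (j < p)%N ->
     mu * (4 / j`!%:R * d t j) `^ (p%:R)^-1 <= alpha) ->
  (forall t j, (t < T)%N -> (j < p)%N ->
     2 * L * mu ^+ p.+1 / (p.+1)`!%:R
         * (4 / j`!%:R * d t j) `^ (p.+1%:R / p%:R)
       + 4 / j`!%:R * d t j <= eta) ->
  (forall t, (t < T)%N -> d t p <= p`!%:R / (2 * mu ^+ p)) ->
  forall t, (1 <= t <= T)%N ->
    enorm (traj f pistar (fun _ => 0) xi t - traj f pi (fun _ => 0) xi t)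
      <= \big[Num.max/0]_(k < t) \big[Num.max/0]_(j < p)
           (mu * (4 / j`!%:R) `^ (p%:R)^-1 * (d k j) `^ (p%:R)^-1).
Proof.
move=> _ eta0 [beta ISS] p0 _ Xxi Cpi Cpistar taylor_bound mu0 alpha0 alpha_half ginv d.
move=> low_alpha low_eta top t /andP[_ tT].
have [n0|n_gt0] := posnP n; first by rewrite enorm_dim0 // bigmax_ge_id.
have L0 : 0 <= L.
  have : 0 <= L / (p.+1)`!%:R.
    apply: (coef_ge0_of_enorm_bound (j := p.+1) n_gt0) => x x0.
    exact: le_trans (enorm_ge0 _) (taylor_bound _ (or_introl erefl) x x0).
  by rewrite pmulr_lge0 // invr_gt0 ltr0n fact_gt0.
have root_split k (j : 'I_p) : mu * (4 / j`!%:R) `^ p%:R^-1 * d k j `^ p%:R^-1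
    = mu * (4 / j`!%:R * d k j) `^ p%:R^-1.
  by rewrite -mulrA -powRM ?divr_ge0 ?ler0n //
    (dDelta_norm_ge0 _ Cpi Cpistar (ltnW (ltn_ord j))).
under eq_bigr do under eq_bigr do rewrite root_split.
exact: (tracking ISS Xxi p0 Cpi Cpistar taylor_bound L0 mu0 (ltW eta0) (ltW alpha0)
  alpha_half ginv low_alpha low_eta top tT).
Qed.
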